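(* Let $P,Q$ be convex polygons in the plane, with all vertices in general position, that form a weakly disjoint pair. Then their boundaries $\partial P$ and $\partial Q$ intersect in at most two points.
   Context: Two convex polygons $P,Q$ form a weakly disjoint pair if $P\setminus Q$ and $Q\setminus P$ are both connected sets and $P$ and $Q$ share no vertex. The convex hull of a line segment is regarded as a valid degenerate convex polygon with two edges. *)

From HB Require Import structures.
From mathcomp Require Import all_boot all_order all_algebra.
From mathcomp Require Import all_classical all_reals all_analysis.
Set Implicit Arguments. Unset Strict Implicit. Unset Printing Implicit Defensive.
Import Order.TTheory GRing.Theory Num.Theory.
Import numFieldNormedType.Exports.
Local Open Scope classical_set_scope.
Local Open Scope ring_scope.

Section Defs.
Variable R : realType.
Notation pt := (R * R)%type.

Definition polyhull (s : seq pt) : set pt :=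
  [set x | exists w : nat -> R,
     (forall i, 0 <= w i) /\ \sum_(i < size s) w i = 1 /\
     x.1 = \sum_(i < size s) w i * (nth (0, 0) s i).1 /\
     x.2 = \sum_(i < size s) w i * (nth (0, 0) s i).2].

(* a convex polygon given by its list of vertices: at least two distinct
   vertices, each vertex extreme (not in the hull of the others);
   two vertices = degenerate polygon (a segment) *)
Definition is_convex_polygon (s : seq pt) : Prop :=
  (2 <= size s)%N /\ uniq s /\ (forall v, v \in s -> ~ polyhull (rem v s) v).

Definition collinear (a b c : pt) : Prop :=
  (b.1 - a.1) * (c.2 - a.2) - (b.2 - a.2) * (c.1 - a.1) = 0.

Definition general_position (s : seq pt) : Prop :=
  forall a b c, a \in s -> b \in s -> c \in s ->
    a != b -> b != c -> a != c -> ~ collinear a b c.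

Definition weakly_disjoint (p q : seq pt) : Prop :=
  connected (polyhull p `\` polyhull q) /\ connected (polyhull q `\` polyhull p) /\
  (forall v, v \in p -> v \notin q).

Definition boundary (A : set pt) : set pt := closure A `\` interior A.
End Defs.

From HB Require Import structures.
From mathcomp Require Import all_boot all_order all_algebra.
From mathcomp Require Import all_classical all_reals all_analysis.
From mathcomp Require Import ring lra.
Set Implicit Arguments. Unset Strict Implicit. Unset Printing Implicit Defensive.
Import Order.TTheory GRing.Theory Num.Theory.
Import numFieldNormedType.Exports.
Local Open Scope classical_set_scope.
Local Open Scope ring_scope.

(* Each point of the two boundaries is a transversal crossing: as [P] and [Q]
   share no vertex and the vertices are in general position, it lies inside an
   edge of [P] and inside a non-parallel edge of [Q].  Orient a crossing by the
   sign of the cross product of the two outer normals.  If two crossings [a] and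
   [b] had the same orientation, points of [P \ Q] just beyond [a] and just
   beyond [b] would lie on opposite sides of the line [a b] (or the same holds
   for [Q \ P] when [b] lies on an edge line through [a]).  But [P \ Q] misses
   that line, since [P] meets it within the chord [a b] of [Q]; so [P \ Q]
   would be disconnected.  Among three nonzero signs two agree. *)

Section PlaneGeometry.
Variable R : realType.
Notation pt := (R * R)%type.
Implicit Types (s t p q W : seq pt) (a b d e m n u v w x y z : pt).

Definition dot n w : R := n.1 * w.1 + n.2 * w.2.
Definition cross a b : R := a.1 * b.2 - a.2 * b.1.
Definition vsub a b : pt := (a.1 - b.1, a.2 - b.2).
Definition mir w : pt := (w.1, - w.2).

Lemma dotC a b : dot a b = dot b a.
Proof. by rewrite /dot mulrC (mulrC a.2). Qed.

Lemma crossC a b : cross b a = - cross a b.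
Proof. rewrite /cross; ring. Qed.

Lemma dot_vsub n a b : dot n (vsub b a) = dot n b - dot n a.
Proof. rewrite /dot /vsub /=; ring. Qed.

Lemma dot_mirl a b : dot (mir a) b = dot a (mir b).
Proof. rewrite /dot /mir /=; ring. Qed.

Lemma dot_mir a b : dot (mir a) (mir b) = dot a b.
Proof. rewrite /dot /mir /=; ring. Qed.

Lemma cross_mir a b : cross (mir a) (mir b) = - cross a b.
Proof. rewrite /cross /mir /=; ring. Qed.

Lemma dot_gt0 d : d != (0, 0) -> 0 < dot d d.
Proof.
case: d => d1 d2 hd; rewrite /dot /= lt_def addr_ge0 ?sqr_ge0 // andbT.
apply: contra hd; rewrite paddr_eq0 ?sqr_ge0 // !mulf_eq0 !orbb.
by case/andP=> /eqP-> /eqP->.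
Qed.

Lemma vsub_neq0 v y : v != y -> vsub v y != (0, 0).
Proof.
case: v y => v1 v2 [y1 y2] hv; apply: contra hv => /eqP[/eqP + /eqP].
by rewrite !subr_eq0 => /eqP-> /eqP->.
Qed.

Lemma cross_dot_decomp d b w :
  dot d d * cross b w = dot d w * cross b d + cross d w * dot b d.
Proof. rewrite /dot /cross; ring. Qed.

Lemma cross_cycle a b c d :
  cross a b * cross d c + cross b c * cross d a + cross c a * cross d b = 0.
Proof. rewrite /cross; ring. Qed.

Lemma cross_mul e d n m : cross e d * cross n m = dot e n * dot d m - dot e m * dot d n.
Proof. rewrite /cross /dot; ring. Qed.

Lemma cross_dot_eq0 d w : d != (0, 0) -> cross d w = 0 -> dot d w = 0 -> w = (0, 0).
Proof.
move=> /dot_gt0 /lt0r_neq0 dd c0 d0; case: w c0 d0 => w1 w2 c0 d0.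
have e1 : dot d d * w1 = dot d (w1, w2) * d.1 - cross d (w1, w2) * d.2.
  by rewrite /dot /cross /=; ring.
have e2 : dot d d * w2 = dot d (w1, w2) * d.2 + cross d (w1, w2) * d.1.
  by rewrite /dot /cross /=; ring.
rewrite c0 d0 !mul0r subr0 addr0 in e1 e2.
by move/eqP: e1 e2; rewrite mulf_eq0 (negbTE dd) => /eqP-> /eqP; rewrite mulf_eq0 (negbTE dd) => /eqP->.
Qed.

Lemma cross_eq0_of_orthogonal n m e : e != (0, 0) -> dot n e = 0 -> dot m e = 0 ->
  cross n m = 0.
Proof.
move=> /dot_gt0 /lt0r_neq0 de h1 h2; apply: (mulfI de); rewrite mulr0.
have -> : dot e e * cross n m = e.1 * (m.2 * dot n e - n.2 * dot m e)
  + e.2 * (- m.1 * dot n e + n.1 * dot m e) by rewrite /dot /cross; ring.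
by rewrite h1 h2; ring.
Qed.

Lemma dot_eq0_of_parallel n m z : m != (0, 0) -> cross n m = 0 -> dot m z = 0 ->
  dot n z = 0.
Proof.
move=> /dot_gt0 /lt0r_neq0 dm c0 d0; apply: (mulfI dm); rewrite mulr0.
have -> : dot m m * dot n z = dot m n * dot m z - cross n m * cross m z.
  by rewrite /dot /cross; ring.
by rewrite c0 d0; ring.
Qed.

Lemma collinear_of_dot_eq n a b c : n != (0, 0) ->
  dot n a = dot n b -> dot n a = dot n c -> collinear a b c.
Proof.
move=> /dot_gt0 /lt0r_neq0 dn hab hac; rewrite /collinear; apply: (mulfI dn).
rewrite mulr0.
have -> : dot n n * ((b.1 - a.1) * (c.2 - a.2) - (b.2 - a.2) * (c.1 - a.1)) =
  (n.1 * (c.2 - a.2) - n.2 * (c.1 - a.1)) * (dot n b - dot n a)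
  - (n.1 * (b.2 - a.2) - n.2 * (b.1 - a.1)) * (dot n c - dot n a).
  by rewrite /dot; ring.
by rewrite -hab -hac !subrr !mulr0 subrr.
Qed.

Lemma sum_indicator (N k : nat) (F : nat -> R) : (k < N)%N ->
  \sum_(i < N) (((i : nat) == k)%:R * F i) = F k.
Proof.
move=> kN; rewrite (bigD1 (Ordinal kN)) //= eqxx mul1r big1 ?addr0 // => i ik.
suff /negbTE-> : (i : nat) != k by rewrite mul0r.
by apply: contra ik => /eqP ik; apply/eqP/val_inj.
Qed.

Lemma polyhull_halfplane s x n (c : R) : polyhull s x ->
  (forall v, v \in s -> dot n v <= c) -> dot n x <= c.
Proof.
move=> [w [w0 [ws [hx1 hx2]]]] hv.
have -> : dot n x = \sum_(i < size s) w i * dot n (nth (0, 0) s i).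
  rewrite /dot hx1 hx2 !mulr_sumr -big_split /=; apply: eq_bigr => i _.
  rewrite /dot; ring.
apply: (@le_trans _ _ (\sum_(i < size s) w i * c)).
  by apply: ler_sum => i _; apply: ler_wpM2l => //; apply/hv/mem_nth.
by rewrite -mulr_suml ws mul1r.
Qed.

Lemma polyhull_comb3 s u v z (a b c : R) :
  u \in s -> v \in s -> z \in s -> 0 <= a -> 0 <= b -> 0 <= c -> a + b + c = 1 ->
  polyhull s (a * u.1 + b * v.1 + c * z.1, a * u.2 + b * v.2 + c * z.2).
Proof.
move=> hu hv hz ha hb hc habc.
pose W (i : nat) := a * (i == index u s)%:R + b * (i == index v s)%:R
   + c * (i == index z s)%:R.
have sumW (F : nat -> R) : \sum_(i < size s) W i * F i =
    a * F (index u s) + b * F (index v s) + c * F (index z s).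
  rewrite -[F (index u s)](@sum_indicator (size s)) ?index_mem //.
  rewrite -[F (index v s)](@sum_indicator (size s)) ?index_mem //.
  rewrite -[F (index z s)](@sum_indicator (size s)) ?index_mem //.
  by rewrite !mulr_sumr -!big_split /=; apply: eq_bigr => i _; rewrite /W; ring.
exists W; split; [|split; [|split]].
- by move=> i; rewrite /W !addr_ge0 // mulr_ge0 // ler0n.
- rewrite -habc; have := sumW (fun _ => 1); rewrite !mulr1 => <-.
  by apply: eq_bigr => i _; rewrite mulr1.
- by rewrite /= (sumW (fun i => (nth (0, 0) s i).1)) !nth_index.
- by rewrite /= (sumW (fun i => (nth (0, 0) s i).2)) !nth_index.
Qed.

Lemma polyhull_vertex s v : v \in s -> polyhull s v.
Proof.
move=> vs; have := polyhull_comb3 vs vs vs ler01 (lexx 0) (lexx 0).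
rewrite !mul1r !mul0r !addr0 -surjective_pairing; apply; ring.
Qed.

Lemma polyhull_segment s x y (t : R) : polyhull s x -> polyhull s y -> 0 <= t <= 1 ->
  polyhull s ((1 - t) * x.1 + t * y.1, (1 - t) * x.2 + t * y.2).
Proof.
move=> [w [w0 [ws [hx1 hx2]]]] [w' [w0' [ws' [hy1 hy2]]]] /andP[t0 t1].
exists (fun i => (1 - t) * w i + t * w' i); split; [|split; [|split]].
- by move=> i; rewrite addr_ge0 // mulr_ge0 // subr_ge0.
- by rewrite big_split /= -!mulr_sumr ws ws' !mulr1 subrK.
- rewrite /= hx1 hy1 !mulr_sumr -big_split /=; apply: eq_bigr => i _; ring.
- rewrite /= hx2 hy2 !mulr_sumr -big_split /=; apply: eq_bigr => i _; ring.
Qed.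

Lemma polyhull_of_balanced s y v1 v2 v3 (al be ga : R) :
  v1 \in s -> v2 \in s -> v3 \in s -> 0 <= al -> 0 <= be -> 0 <= ga ->
  0 < al + be + ga ->
  al * (v1.1 - y.1) + be * (v2.1 - y.1) + ga * (v3.1 - y.1) = 0 ->
  al * (v1.2 - y.2) + be * (v2.2 - y.2) + ga * (v3.2 - y.2) = 0 ->
  polyhull s y.
Proof.
move=> h1 h2 h3 ha hb hc hS e1 e2.
set S := al + be + ga in hS; have S0 : S != 0 by rewrite gt_eqF.
have := polyhull_comb3 h1 h2 h3 (divr_ge0 ha (ltW hS)) (divr_ge0 hb (ltW hS))
  (divr_ge0 hc (ltW hS)).
have -> : al / S + be / S + ga / S = 1 by rewrite /S; field.
move=> /(_ erefl); congr polyhull; case: y e1 e2 => y1 y2 /= e1 e2.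
congr pair; apply/eqP; rewrite -subr_eq0; apply/eqP.
- have -> : al / S * v1.1 + be / S * v2.1 + ga / S * v3.1 - y1 =
    (al * (v1.1 - y1) + be * (v2.1 - y1) + ga * (v3.1 - y1)) / S by rewrite /S; field.
  by rewrite e1 mul0r.
- have -> : al / S * v1.2 + be / S * v2.2 + ga / S * v3.2 - y2 =
    (al * (v1.2 - y2) + be * (v2.2 - y2) + ga * (v3.2 - y2)) / S by rewrite /S; field.
  by rewrite e2 mul0r.
Qed.

(* The barycentric coordinates of [y] in the triangle [v1 v2 v3] are
   proportional to the three cross products. *)
Lemma polyhull_triangle s y v1 v2 v3 : v1 \in s -> v2 \in s -> v3 \in s ->
  let al := cross (vsub v2 y) (vsub v3 y) in
  let be := cross (vsub v3 y) (vsub v1 y) in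
  let ga := cross (vsub v1 y) (vsub v2 y) in
  (0 <= al /\ 0 <= be /\ 0 <= ga /\ 0 < al + be + ga) \/
  (al <= 0 /\ be <= 0 /\ ga <= 0 /\ al + be + ga < 0) ->
  polyhull s y.
Proof.
move=> h1 h2 h3 al be ga [[a0 [b0 [g0 S0]]] | [a0 [b0 [g0 S0]]]].
  by apply: (polyhull_of_balanced h1 h2 h3 a0 b0 g0 S0);
    rewrite /al /be /ga /cross /vsub /=; ring.
apply: (polyhull_of_balanced h1 h2 h3 (al := - al) (be := - be) (ga := - ga)); try lra;
  by rewrite /al /be /ga /cross /vsub /=; ring.
Qed.

Lemma cross_trans d a b c : 0 < cross d a -> 0 < cross d b -> 0 < cross d c ->
  0 < cross a b -> 0 < cross b c -> 0 < cross a c.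
Proof.
move=> da db dc ab bc; have := cross_cycle a b c d.
have := mulr_gt0 ab dc; have := mulr_gt0 bc da => h1 h2 e.
have h3 : cross c a * cross d b < 0 by lra.
by move: h3; rewrite pmulr_llt0 // crossC oppr_lt0.
Qed.

Lemma cross_max d W : W != [::] -> (forall w, w \in W -> 0 < cross d w) ->
  exists2 a, a \in W & forall w, w \in W -> cross a w <= 0.
Proof.
elim: W => // x W IH _ hW.
have crossxx : cross x x = 0 by rewrite /cross; ring.
case: (eqVneq W [::]) => [-> | WN].
  by exists x => [|w]; rewrite ?mem_seq1 // => /eqP->; rewrite crossxx.
have hW' w : w \in W -> 0 < cross d w by move=> wW; apply: hW; rewrite in_cons wW orbT.
have [a aW ha] := IH WN hW'.
case: (lerP (cross a x) 0) => hax.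
  exists a => [|w]; first by rewrite in_cons aW orbT.
  by rewrite in_cons => /orP[/eqP ->|]; [|apply: ha].
exists x => [|w]; first by rewrite mem_head.
rewrite in_cons => /orP[/eqP ->|wW]; first by rewrite crossxx.
rewrite leNgt; apply/negP => hxw.
have := cross_trans (hW' a aW) (hW x (mem_head _ _)) (hW' w wW) hax hxw.
by rewrite ltNge ha.
Qed.

Lemma cross_min d W : W != [::] -> (forall w, w \in W -> cross d w < 0) ->
  exists2 b, b \in W & forall w, w \in W -> 0 <= cross b w.
Proof.
move=> WN hW.
have [|w /mapP[w' w'W ->]|a /mapP[b bW ->] ha] := @cross_max (mir d) (map mir W).
- by case: W WN {hW}.
- by rewrite cross_mir oppr_gt0 hW.
exists b => // w wW.
by have := ha (mir w) (map_f _ wW); rewrite cross_mir oppr_le0.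
Qed.

Definition in_open_halfplane W := exists n, forall w, w \in W -> dot n w < 0.

Definition antipodal_pair W :=
  exists w1 w2, [/\ w1 \in W, w2 \in W, cross w1 w2 = 0 & dot w1 w2 < 0].

Definition positive_triple W := exists w1 w2 w3, [/\ w1 \in W, w2 \in W, w3 \in W &
  [/\ 0 < cross w1 w2, 0 < cross w2 w3 & 0 < cross w3 w1]].

Lemma halfplane_of_cross_le0 W d : d \in W ->
  (forall w, w \in W -> cross d w <= 0) ->
  (forall w, w \in W -> cross d w = 0 -> 0 < dot d w) ->
  in_open_halfplane W.
Proof.
move=> dW hle hpar.
have dd : 0 < dot d d by apply: hpar => //; rewrite /cross; ring.
set B := [seq w <- W | cross d w < 0].
have hB w : w \in B -> cross d w < 0 by rewrite mem_filter => /andP[].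
have BorP w : w \in W -> w \in B \/ cross d w = 0.
  move=> wW; rewrite mem_filter wW andbT.
  by case: (ltgtP (cross d w) 0) => h; [left|have := hle w wW; lra|right].
case: (eqVneq B [::]) => [B0|BN].
  exists (- d.1, - d.2) => w wW.
  case: (BorP w wW); first by rewrite B0.
  by move=> /(hpar w wW); rewrite /dot /=; lra.
have [b bB hb] := cross_min BN hB.
have [db bW] : cross d b < 0 /\ b \in W by move: bB; rewrite mem_filter => /andP[].
exists (- (d.2 - b.2), d.1 - b.1) => w wW.
have -> : dot (- (d.2 - b.2), d.1 - b.1) w = cross d w - cross b w.
  by rewrite /dot /cross /=; ring.
case: (BorP w wW) => [wB|c0]; first by have := hb w wB; have := hB w wB; lra.
have dw := hpar w wW c0.
have I := cross_dot_decomp d b w; rewrite c0 mul0r addr0 (crossC d b) in I.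
suff : 0 < dot d d * cross b w by rewrite pmulr_rgt0 // c0 => h; lra.
by rewrite I; nra.
Qed.

Lemma halfplane_of_cross_ge0 W d : d \in W ->
  (forall w, w \in W -> 0 <= cross d w) ->
  (forall w, w \in W -> cross d w = 0 -> 0 < dot d w) ->
  in_open_halfplane W.
Proof.
move=> dW hge hpar.
have [||n hn] := @halfplane_of_cross_le0 (map mir W) (mir d) (map_f mir dW).
- by move=> _ /mapP[w wW ->]; rewrite cross_mir oppr_le0 hge.
- move=> _ /mapP[w wW ->]; rewrite cross_mir dot_mir => /eqP; rewrite oppr_eq0.
  by move=> /eqP; apply: hpar.
by exists (mir n) => w wW; rewrite dot_mirl; apply/hn/map_f.
Qed.

Lemma angular_two_sides W d : d \in W ->
  (exists2 w, w \in W & 0 < cross d w) -> (exists2 w, w \in W & cross d w < 0) ->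
  (forall w, w \in W -> cross d w = 0 -> 0 < dot d w) ->
  [\/ in_open_halfplane W, antipodal_pair W | positive_triple W].
Proof.
move=> dW [a0 a0W da0] [b0 b0W db0] hpar.
set A := [seq w <- W | 0 < cross d w]; set B := [seq w <- W | cross d w < 0].
have hA w : w \in A -> 0 < cross d w by rewrite mem_filter => /andP[].
have hB w : w \in B -> cross d w < 0 by rewrite mem_filter => /andP[].
have AN : A != [::] by apply: contraTneq (_ : a0 \in A) => [->|]; rewrite ?mem_filter ?da0.
have BN : B != [::] by apply: contraTneq (_ : b0 \in B) => [->|]; rewrite ?mem_filter ?db0.
have [a aA ha] := cross_max AN hA.
have [b bB hb] := cross_min BN hB.
have aW : a \in W by move: aA; rewrite mem_filter => /andP[].
have bW : b \in W by move: bB; rewrite mem_filter => /andP[].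
have da := hA a aA; have db := hB b bB.
have dd : 0 < dot d d by apply: hpar => //; rewrite /cross; ring.
case: (ltgtP (cross a b) 0) => hab.
- apply: Or31; exists (- (a.2 - b.2), a.1 - b.1) => w wW.
  have -> : dot (- (a.2 - b.2), a.1 - b.1) w = cross a w - cross b w.
    by rewrite /dot /cross /=; ring.
  have T := cross_cycle a b w d.
  case: (ltgtP (cross d w) 0) => dw.
  + have hbw : 0 <= cross b w by apply: hb; rewrite mem_filter dw wW.
    have t1 : 0 < cross a b * cross d w by nra.
    have t2 : 0 <= cross b w * cross d a by nra.
    have t3 : cross w a * cross d b < 0 by lra.
    rewrite (crossC a w) in t3; nra.
  + have haw : cross a w <= 0 by apply: ha; rewrite mem_filter dw wW.
    have t1 : cross a b * cross d w < 0 by nra.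
    have t3 : cross w a * cross d b <= 0 by rewrite crossC; nra.
    have : 0 < cross b w * cross d a by lra.
    by rewrite pmulr_lgt0 // => ?; lra.
  + have dw' := hpar w wW dw.
    have Ia := cross_dot_decomp d a w; have Ib := cross_dot_decomp d b w.
    rewrite dw mul0r addr0 (crossC d a) in Ia; rewrite dw mul0r addr0 (crossC d b) in Ib.
    have : dot d d * (cross a w - cross b w) < 0 by rewrite mulrBr Ia Ib; nra.
    by rewrite pmulr_rlt0.
- by apply: Or33; exists d, a, b; split => //; split; rewrite // crossC oppr_gt0.
- apply: Or32; exists a, b; split => //.
  have aa : 0 < dot a a.
    by apply: dot_gt0; apply/eqP => a00; move: da; rewrite a00 /cross /=; lra.
  have := cross_dot_decomp a d b; rewrite hab mul0r addr0 => I.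
  have : dot a a * cross d b < 0 by nra.
  rewrite I => h; nra.
Qed.

Lemma angular W : W != [::] -> (forall w, w \in W -> w != (0, 0)) ->
  [\/ in_open_halfplane W, antipodal_pair W | positive_triple W].
Proof.
case: W => // d W' _ hW0; set W := d :: W'.
have dW : d \in W by rewrite mem_head.
have [anti|noanti] := pselect (antipodal_pair W); first exact: Or32.
have hpar w : w \in W -> cross d w = 0 -> 0 < dot d w.
  move=> wW c0; case: (ltgtP (dot d w) 0) => // d0.
  - by case: noanti; exists d, w; split.
  - by have := cross_dot_eq0 (hW0 d dW) c0 d0; move: (hW0 w wW) => /eqP.
have [pos|nopos] := pselect (exists2 w, w \in W & 0 < cross d w).
  have [neg|noneg] := pselect (exists2 w, w \in W & cross d w < 0).
    exact: angular_two_sides dW pos neg hpar.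
  apply: Or31; apply: (halfplane_of_cross_ge0 dW _ hpar) => w wW.
  by rewrite leNgt; apply/negP => h; apply: noneg; exists w.
apply: Or31; apply: (halfplane_of_cross_le0 dW _ hpar) => w wW.
by rewrite leNgt; apply/negP => h; apply: nopos; exists w.
Qed.

Definition near_box x (P : pt -> Prop) := exists2 e : R, 0 < e &
  forall y, `|x.1 - y.1| < e -> `|x.2 - y.2| < e -> P y.

Lemma near_box_nbhs x (A : set pt) : near_box x A -> nbhs x A.
Proof.
move=> [e e0 H]; apply/nbhs_ballP; exists e => //= y [/= h1 h2].
by apply: H; [move: h1 | move: h2]; rewrite /ball /=.
Qed.

Lemma near_boxI x (P Q : pt -> Prop) : near_box x P -> near_box x Q ->
  near_box x (fun y => P y /\ Q y).
Proof.
move=> [e1 e10 H1] [e2 e20 H2]; exists (Num.min e1 e2); first by rewrite lt_min e10.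
by move=> y; rewrite !lt_min => /andP[a1 a2] /andP[b1 b2]; split; [apply: H1 | apply: H2].
Qed.

Lemma near_box_sub x (P Q : pt -> Prop) : near_box x P -> (forall y, P y -> Q y) ->
  near_box x Q.
Proof. by move=> [e e0 H] PQ; exists e => // y h1 h2; apply/PQ/H. Qed.

Lemma affine_gt0_near (c0 a1 a2 : R) : 0 < c0 -> exists2 e : R, 0 < e &
  forall r1 r2 : R, `|r1| < e -> `|r2| < e -> 0 < c0 + a1 * r1 + a2 * r2.
Proof.
move=> c0p; set K := `|a1| + `|a2| + 1.
have Kp : 0 < K by rewrite /K ltr_wpDl // addr_ge0.
exists (c0 / K) => [|r1 r2 h1 h2]; first by rewrite divr_gt0.
have b1 : - (a1 * r1) <= `|a1| * (c0 / K).
  by rewrite (le_trans (ler_norm _)) // normrN normrM ler_wpM2l // ltW.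
have b2 : - (a2 * r2) <= `|a2| * (c0 / K).
  by rewrite (le_trans (ler_norm _)) // normrN normrM ler_wpM2l // ltW.
have e : `|a1| * (c0 / K) + `|a2| * (c0 / K) = c0 - c0 / K.
  by rewrite /K; field; rewrite -/K gt_eqF.
have : 0 < c0 / K by rewrite divr_gt0.
lra.
Qed.

Lemma near_box_affine_gt0 x (h : pt -> R) (a1 a2 : R) :
  (forall y, h y = h x + a1 * (y.1 - x.1) + a2 * (y.2 - x.2)) -> 0 < h x ->
  near_box x (fun y => 0 < h y).
Proof.
move=> hE hp; have [e e0 H] := affine_gt0_near a1 a2 hp.
by exists e => // y h1 h2; rewrite hE; apply: H; rewrite distrC.
Qed.

Lemma near_box_cross_gt0 x a b : 0 < cross (vsub a x) (vsub b x) ->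
  near_box x (fun y => 0 < cross (vsub a y) (vsub b y)).
Proof.
apply: (@near_box_affine_gt0 x (fun y => cross (vsub a y) (vsub b y))
  (- (b.2 - a.2)) (b.1 - a.1)) => y.
rewrite /cross /vsub /=; ring.
Qed.

Lemma finite_gap s (f : pt -> R) (r : R) : (forall v, v \in s -> f v < r) ->
  exists c, c < r /\ forall v, v \in s -> f v <= c.
Proof.
elim: s => [|x s IH] H; first by exists (r - 1); split => //; lra.
have [c [cr hc]] := IH (fun v vs => H v (mem_behead (s := x :: s) vs)).
exists (Num.max (f x) c); split; first by rewrite gt_max cr H // mem_head.
move=> v; rewrite in_cons => /orP[/eqP ->|vs]; first by rewrite le_max lexx.
by rewrite le_max hc ?orbT.
Qed.

Lemma polyhull_separation s y : s != [::] -> ~ polyhull s y ->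
  exists n (c : R), (forall v, v \in s -> dot n v <= c) /\ c < dot n y.
Proof.
move=> sN Py.
set W := [seq vsub v y | v <- s].
have WN : W != [::] by rewrite /W; case: s sN {Py W}.
have Wnz w : w \in W -> w != (0, 0).
  by case/mapP=> v vs ->; apply/vsub_neq0/(contra_not_neq _ Py) => <-; apply: polyhull_vertex.
case: (angular WN Wnz) => [[n Hn]|[w1 [w2 [h1 h2 c0 d0]]]|[w1 [w2 [w3 [h1 h2 h3 [c1 c2 c3]]]]]].
- have [c [cl hc]] := @finite_gap s (dot n) (dot n y) (fun v vs =>
    ltac:(have := Hn _ (map_f (vsub^~ y) vs); rewrite dot_vsub; lra)).
  by exists n, c.
- exfalso; apply: Py.
  have dp := dot_gt0 (Wnz _ h1).
  move: h1 h2 => /mapP[v1 v1s e1] /mapP[v2 v2s e2].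
  apply: (@polyhull_of_balanced s y v1 v2 v2 (- dot w1 w2) (dot w1 w1) 0) => //;
    rewrite ?addr0; try lra.
  + have -> : - dot w1 w2 * (v1.1 - y.1) + dot w1 w1 * (v2.1 - y.1) + 0 * (v2.1 - y.1)
        = - cross w1 w2 * w1.2 by rewrite e1 e2 /dot /cross /vsub /=; ring.
    by rewrite c0; ring.
  + have -> : - dot w1 w2 * (v1.2 - y.2) + dot w1 w1 * (v2.2 - y.2) + 0 * (v2.2 - y.2)
        = cross w1 w2 * w1.1 by rewrite e1 e2 /dot /cross /vsub /=; ring.
    by rewrite c0; ring.
- exfalso; apply: Py.
  move: h1 h2 h3 => /mapP[v1 v1s e1] /mapP[v2 v2s e2] /mapP[v3 v3s e3].
  apply: (polyhull_triangle v1s v2s v3s); left; rewrite -e1 -e2 -e3.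
  by split; [lra|split; [lra|split; lra]].
Qed.

Lemma closed_polyhull s : s != [::] -> closed (polyhull s).
Proof.
move=> sN; rewrite -openC openE => y /= Py.
have [n [c [hv hc]]] := polyhull_separation sN Py.
apply: near_box_nbhs.
have hp : 0 < dot n y - c by lra.
apply: (near_box_sub (@near_box_affine_gt0 y (fun z => dot n z - c) n.1 n.2 _ hp)).
  by move=> z; rewrite /dot; ring.
by move=> z Hz Pz; have := polyhull_halfplane Pz hv; lra.
Qed.

Lemma near_box_polyhull_triangle s x v1 v2 v3 : v1 \in s -> v2 \in s -> v3 \in s ->
  0 < cross (vsub v1 x) (vsub v2 x) -> 0 < cross (vsub v2 x) (vsub v3 x) ->
  0 < cross (vsub v3 x) (vsub v1 x) -> near_box x (polyhull s).
Proof.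
move=> v1s v2s v3s /near_box_cross_gt0 N1 /near_box_cross_gt0 N2 /near_box_cross_gt0 N3.
apply: (near_box_sub (near_boxI N1 (near_boxI N2 N3))) => y [a1 [a2 a3]].
by apply: (polyhull_triangle v1s v2s v3s); left; lra.
Qed.

(* [x] lies in the triangle [v1 v2 v3] or in the triangle [v1 v2 v4], and both
   triangle conditions persist near [x]. *)
Lemma near_box_polyhull_quadrilateral s x v1 v2 v3 v4 :
  v1 \in s -> v2 \in s -> v3 \in s -> v4 \in s ->
  0 < cross (vsub v3 x) (vsub v2 x) -> 0 < cross (vsub v1 x) (vsub v3 x) ->
  0 < cross (vsub v2 x) (vsub v4 x) -> 0 < cross (vsub v4 x) (vsub v1 x) ->
  near_box x (polyhull s).
Proof.
move=> v1s v2s v3s v4s /near_box_cross_gt0 N1 /near_box_cross_gt0 N2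
  /near_box_cross_gt0 N3 /near_box_cross_gt0 N4.
apply: (near_box_sub (near_boxI (near_boxI N1 N2) (near_boxI N3 N4))).
move=> y [[a1 a2] [a3 a4]].
case: (lerP (cross (vsub v1 y) (vsub v2 y)) 0) => g.
- apply: (polyhull_triangle v1s v2s v3s); right.
  by rewrite /= (crossC (vsub v3 y) (vsub v2 y)) (crossC (vsub v1 y) (vsub v3 y)); lra.
- by apply: (polyhull_triangle v1s v2s v4s); left; lra.
Qed.

Definition supporting s x n := n != (0, 0) /\ forall w, w \in s -> dot n w <= dot n x.

Lemma unsupported_both_sides s x e : e != (0, 0) -> ~ (exists n, supporting s x n) ->
  (exists2 v, v \in s & 0 < cross e (vsub v x)) /\
  (exists2 v, v \in s & cross e (vsub v x) < 0).
Proof.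
case: e => e1 e2 e0 Hnot.
have beyond n : n != (0, 0) -> exists2 v, v \in s & dot n x < dot n v.
  move=> n0; apply: contrapT => hn; apply: Hnot; exists n; split => // w ws.
  by rewrite leNgt; apply/negP => h; apply: hn; exists w.
have [n1 n2] : (- e2, e1) != (0, 0) /\ (e2, - e1) != (0, 0).
  by split; apply: contra e0 => /eqP[/eqP + /eqP]; rewrite ?oppr_eq0 => /eqP-> /eqP->.
split.
- have [v vs hv] := beyond _ n1; exists v => //.
  by move: hv; rewrite /dot /cross /vsub /=; lra.
- have [v vs hv] := beyond _ n2; exists v => //.
  by move: hv; rewrite /dot /cross /vsub /=; lra.
Qed.

Lemma polyhull_supporting_line s x u v : u \in s -> v \in s -> u != v ->
  ~ nbhs x (polyhull s) -> exists n, supporting s x n.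
Proof.
move=> us vs uv Nint; apply: contrapT => Hnot; apply/Nint/near_box_nbhs.
have [v0 v0s v0x] : exists2 v, v \in s & v != x.
  by case: (eqVneq u x) => [<-|]; [exists v; rewrite // eq_sym|exists u].
clear u v us vs uv.
set W := [seq vsub v x | v <- s & v != x].
have memW w : w \in W -> exists2 v, v \in s & w = vsub v x.
  by case/mapP=> v; rewrite mem_filter => /andP[_ vs] ->; exists v.
have Wnz w : w \in W -> w != (0, 0).
  by case/mapP=> v; rewrite mem_filter => /andP[vx _] ->; apply: vsub_neq0.
have v0W : vsub v0 x \in W by apply: map_f; rewrite mem_filter v0x.
have WN : W != [::] by apply: contraTneq v0W => ->.
case: (angular WN Wnz) => [[n Hn]|[w1 [w2 [h1 h2 c0 d0]]]|[w1 [w2 [w3 [h1 h2 h3 [c1 c2 c3]]]]]].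
- have n0 : n != (0, 0).
    by apply: contraTneq (Hn _ v0W) => ->; rewrite /dot /= !mul0r addr0 ltxx.
  case: Hnot; exists n; split => // w ws.
  case: (eqVneq w x) => [->//|wx].
  have wW : vsub w x \in W by apply: map_f; rewrite mem_filter wx.
  by have := Hn _ wW; rewrite dot_vsub => ?; lra.
- have [v1 v1s e1] := memW _ h1; have [v2 v2s e2] := memW _ h2.
  have w1w1 := dot_gt0 (Wnz _ h1).
  have [[v3 v3s c3] [v4 v4s c4]] := unsupported_both_sides (Wnz _ h1) Hnot.
  have I3 := cross_dot_decomp w1 w2 (vsub v3 x).
  have I4 := cross_dot_decomp w1 w2 (vsub v4 x).
  rewrite (crossC w1 w2) c0 oppr0 mulr0 add0r (dotC w2) in I3 I4.
  have s3 : cross w2 (vsub v3 x) < 0 by nra.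
  have s4 : 0 < cross w2 (vsub v4 x) by nra.
  rewrite e1 e2 in s3 s4 c3 c4.
  apply: (near_box_polyhull_quadrilateral v1s v2s v3s v4s); rewrite // crossC; lra.
- have [v1 v1s e1] := memW _ h1; have [v2 v2s e2] := memW _ h2.
  have [v3 v3s e3] := memW _ h3.
  rewrite e1 e2 e3 in c1 c2 c3.
  exact: (near_box_polyhull_triangle v1s v2s v3s).
Qed.

Lemma sum_weights1 (N : nat) (w F : nat -> R) (i : 'I_N) :
  (forall k : 'I_N, k != i -> w k = 0) -> \sum_(k < N) w k * F k = w i * F i.
Proof. by move=> w0; rewrite (bigD1 i) //= big1 ?addr0 // => k ki; rewrite w0 ?mul0r. Qed.

Lemma sum_weights2 (N : nat) (w F : nat -> R) (i j : 'I_N) : j != i ->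
  (forall k : 'I_N, k != i -> k != j -> w k = 0) ->
  \sum_(k < N) w k * F k = w i * F i + w j * F j.
Proof.
move=> ji w0; rewrite (bigD1 i) //= (bigD1 j) //= big1 ?addr0 // => k /andP[kj ki].
by rewrite w0 ?mul0r.
Qed.

Lemma polyhull_weight_on_face s x n (w : nat -> R) :
  (forall i, 0 <= w i) -> \sum_(i < size s) w i = 1 ->
  x.1 = \sum_(i < size s) w i * (nth (0, 0) s i).1 ->
  x.2 = \sum_(i < size s) w i * (nth (0, 0) s i).2 ->
  (forall v, v \in s -> dot n v <= dot n x) ->
  forall i : 'I_(size s), w i != 0 -> dot n (nth (0, 0) s i) = dot n x.
Proof.
move=> w0 ws hx1 hx2 hv i wi.
set f := nth (0, 0) s.
have hd : dot n x = \sum_(j < size s) w j * dot n (f j).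
  rewrite /dot hx1 hx2 !mulr_sumr -big_split /=; apply: eq_bigr => j _.
  rewrite /dot; ring.
have : w i * (dot n x - dot n (f i)) = 0.
  apply: (@psumr_eq0P _ _ predT (fun j : 'I_(size s) => w j * (dot n x - dot n (f j)))).
  - by move=> j _; rewrite mulr_ge0 // subr_ge0 hv // mem_nth.
  - have -> : \sum_(j < size s) w j * (dot n x - dot n (f j)) =
        dot n x * \sum_(j < size s) w j - \sum_(j < size s) w j * dot n (f j).
      by rewrite mulr_sumr -sumrB; apply: eq_bigr => j _; ring.
    by rewrite ws mulr1 -hd subrr.
  - by [].
by move/eqP; rewrite mulf_eq0 (negbTE wi) /= subr_eq0 => /eqP <-.
Qed.

(* [a] lies strictly inside the edge [u v] of the polygon [s], whose outer
   normal is [n]. *)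
Definition edge_point s a n u v (l : R) :=
  [/\ supporting s a n, u \in s, v \in s & u != v] /\
  [/\ dot n u = dot n a, dot n v = dot n a, 0 < l < 1 &
      a = ((1 - l) * u.1 + l * v.1, (1 - l) * u.2 + l * v.2)].

Lemma edge_point_polyhull s a n u v l : edge_point s a n u v l -> polyhull s a.
Proof.
move=> [[_ us vs _] [_ _ /andP[l0 l1] ->]].
apply: polyhull_segment; try exact: polyhull_vertex.
by rewrite !le_eqVlt l0 l1 !orbT.
Qed.

Lemma supporting_face s x n : uniq s -> general_position s -> supporting s x n ->
  polyhull s x -> x \in s \/ exists u v l, edge_point s x n u v l.
Proof.
move=> us gp [n0 sn] [w [w0 [ws [hx1 hx2]]]].
have onF := polyhull_weight_on_face w0 ws hx1 hx2 sn.
set f := nth (0, 0) s in onF hx1 hx2.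
have fs (i : 'I_(size s)) : f i \in s by apply: mem_nth.
have finj (i j : 'I_(size s)) : (f i == f j) = (i == j) by rewrite nth_uniq.
have [i wi] : exists i : 'I_(size s), w i != 0.
  apply: contrapT => hn; move: ws; rewrite big1 => [/eqP|j _].
    by rewrite eq_sym oner_eq0.
  by apply: contrapT => h; apply: hn; exists j; apply/eqP.
have [[j [ji wj]]|one] := pselect (exists j : 'I_(size s), j != i /\ w j != 0).
- right.
  have w0k (k : 'I_(size s)) : k != i -> k != j -> w k = 0.
    move=> ki kj; apply: contrapT => /eqP wk.
    apply: (gp (f i) (f j) (f k)); rewrite ?fs ?finj 1?eq_sym //.
    by apply: (collinear_of_dot_eq n0); rewrite !onF.
  have sumw F := @sum_weights2 _ w F i j ji w0k.
  have wij : w i + w j = 1.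
    by rewrite -ws -[w i]mulr1 -[w j]mulr1 -(sumw (fun => 1)); apply: eq_bigr => k _; rewrite mulr1.
  have wi0 : 0 < w i by rewrite lt_def wi w0.
  have wj0 : 0 < w j by rewrite lt_def wj w0.
  exists (f i), (f j), (w j); split; split.
  - by split.
  - exact: fs.
  - exact: fs.
  - by rewrite finj eq_sym.
  - exact: onF.
  - exact: onF.
  - by apply/andP; split; lra.
  - rewrite [x]surjective_pairing hx1 hx2.
    by rewrite (sumw (fun k => (f k).1)) (sumw (fun k => (f k).2)) -wij addrK.
- left.
  have w0k (k : 'I_(size s)) : k != i -> w k = 0.
    by move=> ki; apply: contrapT => /eqP wk; apply: one; exists k.
  have sumw F := @sum_weights1 _ w F i w0k.
  have wi1 : w i = 1.
    by rewrite -ws -[w i]mulr1 -(sumw (fun => 1)); apply: eq_bigr => k _; rewrite mulr1.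
  rewrite [x]surjective_pairing hx1 hx2 (sumw (fun k => (f k).1)) (sumw (fun k => (f k).2)).
  by rewrite wi1 !mul1r -surjective_pairing.
Qed.

Lemma connected_affine_sign (A : set pt) (h : pt -> R) (a1 a2 : R) y1 y2 :
  (forall y z, h z = h y + a1 * (z.1 - y.1) + a2 * (z.2 - y.2)) ->
  connected A -> (forall y, A y -> h y != 0) -> A y1 -> A y2 -> 0 < h y1 ->
  0 < h y2.
Proof.
move=> hE cA hnz Ay1 Ay2 h1.
have oC : open [set y | 0 < h y].
  rewrite openE => y /= hy; apply: near_box_nbhs.
  exact: (@near_box_affine_gt0 y h a1 a2 (hE y) hy).
have cC : closed [set y | 0 <= h y].
  rewrite -openC openE => y /= hy; apply: near_box_nbhs.
  have hy' : 0 < - h y by rewrite oppr_gt0 ltNge; apply/negP.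
  apply: (near_box_sub (@near_box_affine_gt0 y (fun z => - h z) (- a1) (- a2) _ hy')).
    by move=> z; rewrite (hE y z); ring.
  by move=> z /= hz hz'; lra.
have ne : A `&` [set y | 0 < h y] !=set0 by exists y1.
have e : A `&` [set y | 0 < h y] = A `&` [set y | 0 <= h y].
  apply/seteqP; split => y [Ay hy]; split => //=; first exact: ltW.
  by rewrite lt_def hnz.
have := cA _ ne (ex_intro2 _ _ _ oC erefl) (ex_intro2 _ _ _ cC e).
move=> E; have : (A `&` [set y | 0 < h y]) y2 by rewrite E.
by case.
Qed.

Lemma parallel_coords e w : e != (0, 0) -> cross e w = 0 ->
  w = (dot e w / dot e e * e.1, dot e w / dot e e * e.2).
Proof.
move=> /dot_gt0 /lt0r_neq0 ee c0; case: w c0 => w1 w2 c0.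
have E1 : dot e e * w1 = dot e (w1, w2) * e.1 - cross e (w1, w2) * e.2.
  by rewrite /dot /cross /=; ring.
have E2 : dot e e * w2 = dot e (w1, w2) * e.2 + cross e (w1, w2) * e.1.
  by rewrite /dot /cross /=; ring.
rewrite c0 mul0r subr0 in E1; rewrite c0 mul0r addr0 in E2.
congr pair; apply: (mulfI ee).
- by rewrite E1 mulrA mulrCA divff // mulr1.
- by rewrite E2 mulrA mulrCA divff // mulr1.
Qed.

(* A point of the line [a b] behind both supporting lines, at [a] and at [b],
   lies on the segment [a b]. *)
Lemma polyhull_chord t a b y na nb : a != b -> polyhull t a -> polyhull t b ->
  cross (vsub b a) (vsub y a) = 0 ->
  dot na y <= dot na a -> dot na (vsub b a) < 0 ->
  dot nb y <= dot nb b -> dot nb (vsub a b) < 0 -> polyhull t y.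
Proof.
move=> ab Ta Tb hy ya na_ba yb nb_ab.
have e0 : vsub b a != (0, 0) by rewrite vsub_neq0 // eq_sym.
move: (parallel_coords e0 hy); set r := _ / _; rewrite /vsub /= => -[h1 h2].
have y1 : y.1 = (1 - r) * a.1 + r * b.1 by rewrite -[y.1](subrK a.1) h1; ring.
have y2 : y.2 = (1 - r) * a.2 + r * b.2 by rewrite -[y.2](subrK a.2) h2; ring.
have r0 : 0 <= r.
  have : dot na y - dot na a = r * dot na (vsub b a) by rewrite /dot y1 y2 /vsub /=; ring.
  nra.
have r1 : r <= 1.
  have : dot nb y - dot nb b = (1 - r) * dot nb (vsub a b).
    by rewrite /dot y1 y2 /vsub /=; ring.
  nra.
by rewrite [y]surjective_pairing y1 y2; apply: polyhull_segment => //; rewrite r0 r1.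
Qed.

(* Moving along the edge of [s] through [a] towards the side where the supporting
   line [m] of [t] is violated gives points of [s] outside [t], on the side of
   the line through [a] with direction [e] given by the sign of [cross n m]. *)
Lemma outside_point_near_edge s t a n u v l m e : edge_point s a n u v l ->
  (forall w, w \in t -> dot m w <= dot m a) -> cross n m != 0 -> dot n e < 0 ->
  exists z, [/\ polyhull s z, ~ polyhull t z & cross e (vsub z a) * cross n m < 0].
Proof.
move=> [[_ us vs uv] [hu hv /andP[l0 l1] ha]] hm c0 de.
set d := vsub v u.
have dn : dot n d = 0 by rewrite dot_vsub hu hv subrr.
have d0 : d != (0, 0) by apply: vsub_neq0; rewrite eq_sym.
have k0 : dot m d != 0.
  by apply: contra c0 => /eqP k0; apply/eqP; apply: cross_eq0_of_orthogonal d0 dn k0.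
have [mu [mu0 [mu1 hk]]] : exists mu, 0 <= mu /\ mu <= 1 /\ 0 < (mu - l) * dot m d.
  case: (ltgtP (dot m d) 0) => hk; last by move: k0; rewrite hk eqxx.
    by exists (l / 2); split; [|split]; try lra; nra.
  by exists ((1 + l) / 2); split; [|split]; try lra; nra.
set z := ((1 - mu) * u.1 + mu * v.1, (1 - mu) * u.2 + mu * v.2).
exists z; split.
- have := polyhull_comb3 us vs vs (a := 1 - mu) (b := mu) (c := 0).
  by rewrite !mul0r !addr0; apply => //; lra.
- move=> Pz; have := polyhull_halfplane Pz hm.
  have -> : dot m z = dot m a + (mu - l) * dot m d by rewrite /z ha /dot /d /vsub /=; ring.
  lra.
- have -> : cross e (vsub z a) = (mu - l) * cross e d by rewrite /z ha /cross /d /vsub /=; ring.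
  rewrite -mulrA cross_mul (dotC e n) (dotC d n) dn mulr0 subr0 (dotC d m).
  nra.
Qed.

(* The line [a b] splits [s \ t] into two parts, which points near [a] and near
   [b] reach when the crossings at [a] and [b] have the same orientation. *)
Lemma crossings_disconnect s t a b na ua va la nb ub vb lb ma mb :
  a != b -> polyhull t a -> polyhull t b ->
  edge_point s a na ua va la -> edge_point s b nb ub vb lb ->
  (forall w, w \in t -> dot ma w <= dot ma a) ->
  (forall w, w \in t -> dot mb w <= dot mb b) ->
  0 < cross na ma * cross nb mb ->
  dot na (vsub b a) < 0 -> dot nb (vsub a b) < 0 ->
  ~ connected (polyhull s `\` polyhull t).
Proof.
move=> ab Ta Tb Da Db hma hmb cab dna dnb conn.
have [ca cb] : cross na ma != 0 /\ cross nb mb != 0.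
  by apply/andP; rewrite -negb_or -mulf_eq0 gt_eqF.
have [za [Pza Qza hza]] := outside_point_near_edge Da hma ca dna.
have [zb [Pzb Qzb hzb]] := outside_point_near_edge Db hmb cb dnb.
have Sza : (polyhull s `\` polyhull t) za by [].
have Szb : (polyhull s `\` polyhull t) zb by [].
set h := fun y => cross (vsub b a) (vsub y a).
have hE y z : h z = h y + (- (vsub b a).2) * (z.1 - y.1) + (vsub b a).1 * (z.2 - y.2).
  by rewrite /h /cross /vsub /=; ring.
have opp : h za * h zb < 0.
  have hzb' : h zb = - cross (vsub a b) (vsub zb b) by rewrite /h /cross /vsub /=; ring.
  have : (h za * cross na ma) * (h zb * cross nb mb) < 0 by rewrite hzb' /h /=; nra.
  by rewrite mulrACA pmulr_llt0.
have [[[_ sa] _ _ _] _] := Da; have [[[_ sb] _ _ _] _] := Db.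
have hnz y : (polyhull s `\` polyhull t) y -> h y != 0.
  move=> [Py Qy]; apply/eqP => hy; apply: Qy.
  exact: (polyhull_chord ab Ta Tb hy (polyhull_halfplane Py sa) dna
    (polyhull_halfplane Py sb) dnb).
case: (ltgtP (h za) 0) => hs; last by move: (hnz za Sza); rewrite hs eqxx.
- have hE' y z : - h z = - h y + (vsub b a).2 * (z.1 - y.1) + (- (vsub b a).1) * (z.2 - y.2).
    by rewrite (hE y z); ring.
  have hnz' y : (polyhull s `\` polyhull t) y -> - h y != 0 by rewrite oppr_eq0; apply: hnz.
  have := connected_affine_sign hE' conn hnz' Sza Szb; rewrite !oppr_gt0 => /(_ hs).
  nra.
- by have := connected_affine_sign hE conn hnz Sza Szb hs; nra.
Qed.

Lemma general_position_catl p q : general_position (p ++ q) -> general_position p.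
Proof. by move=> gp a b c ha hb hc; apply: gp; rewrite mem_cat ?ha ?hb ?hc. Qed.

Lemma general_position_catr p q : general_position (p ++ q) -> general_position q.
Proof. by move=> gp a b c ha hb hc; apply: gp; rewrite mem_cat ?ha ?hb ?hc ?orbT. Qed.

Lemma convex_polygon_two_vertices s : is_convex_polygon s ->
  exists u v, [/\ u \in s, v \in s & u != v].
Proof.
move=> [hs [us _]]; exists (nth (0, 0) s 0), (nth (0, 0) s 1).
by rewrite !mem_nth ?nth_uniq // (leq_trans _ hs).
Qed.

Lemma two_of_three_same_sign (x y z : R) : x != 0 -> y != 0 -> z != 0 ->
  [\/ 0 < x * y, 0 < y * z | 0 < x * z].
Proof.
move=> x0 y0 z0; case: (ltP 0 (x * y)) => hxy; first exact: Or31.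
case: (ltP 0 (y * z)) => hyz; first exact: Or32.
have yy : 0 < y ^+ 2 by rewrite exprn_even_gt0.
have xy : x * y < 0 by rewrite lt_def hxy andbT eq_sym mulf_neq0.
have yz : y * z < 0 by rewrite lt_def hyz andbT eq_sym mulf_neq0.
by apply: Or33; nra.
Qed.

Section Crossings.
Variables p q : seq pt.
Hypothesis gp : general_position (p ++ q).
Hypothesis disj : forall v, v \in p -> v \notin q.

Lemma vertex_neq v w : v \in p -> w \in q -> v != w.
Proof. by move=> vp wq; apply: contraTneq wq => <-; apply: disj. Qed.

Lemma not_aligned_ppq n u v w : n != (0, 0) -> u \in p -> v \in p -> w \in q ->
  u != v -> dot n u = dot n w -> dot n v = dot n w -> False.
Proof.
move=> n0 up vp wq uv hu hv.
apply: (gp (a := u) (b := v) (c := w)); rewrite ?mem_cat ?up ?vp ?wq ?orbT //.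
- exact: vertex_neq.
- exact: vertex_neq.
- by apply: (collinear_of_dot_eq n0); rewrite ?hu ?hv.
Qed.

Lemma not_aligned_pqq n u v w : n != (0, 0) -> u \in p -> v \in q -> w \in q ->
  v != w -> dot n v = dot n u -> dot n w = dot n u -> False.
Proof.
move=> n0 up vq wq vw hv hw.
apply: (gp (a := u) (b := v) (c := w)); rewrite ?mem_cat ?up ?vq ?wq ?orbT //.
- exact: vertex_neq.
- exact: vertex_neq.
- by apply: (collinear_of_dot_eq n0); rewrite ?hv ?hw.
Qed.

(* The sign of [k] is the orientation of the two edges meeting at [a]. *)
Definition crossing a (k : R) := k != 0 /\ exists na ua va la ma ub vb lb,
  [/\ edge_point p a na ua va la, edge_point q a ma ub vb lb & cross na ma = k].

Lemma boundary_crossing a : is_convex_polygon p -> is_convex_polygon q ->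
  (boundary (polyhull p) `&` boundary (polyhull q)) a -> exists k, crossing a k.
Proof.
move=> cp cq [[cPa iPa] [cQa iQa]].
have [[_ [up _]] [_ [uq _]]] := (cp, cq).
have [u0 [v0 [u0p v0p uv0]]] := convex_polygon_two_vertices cp.
have [u1 [v1 [u1q v1q uv1]]] := convex_polygon_two_vertices cq.
have Pa : polyhull p a by apply: (closed_polyhull _ cPa); apply: contraTneq u0p => ->.
have Qa : polyhull q a by apply: (closed_polyhull _ cQa); apply: contraTneq u1q => ->.
have [na Sna] := polyhull_supporting_line u0p v0p uv0 iPa.
have [ma Sma] := polyhull_supporting_line u1q v1q uv1 iQa.
have [[na0 _] [ma0 _]] := (Sna, Sma).
case: (supporting_face up (general_position_catl gp) Sna Pa) => [ap|[ua [va [la Ea]]]];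
case: (supporting_face uq (general_position_catr gp) Sma Qa) => [aq|[ub [vb [lb Eb]]]].
- by move: (disj ap); rewrite aq.
- by case: Eb => -[_ ubq vbq uvb] [hub hvb _ _]; case: (not_aligned_pqq ma0 ap ubq vbq uvb).
- by case: Ea => -[_ uap vap uva] [hua hva _ _]; case: (not_aligned_ppq na0 uap vap aq uva).
exists (cross na ma); split; last by exists na, ua, va, la, ma, ub, vb, lb.
apply/eqP => c0.
have [[_ uap vap uva] [hua hva _ _]] := Ea; have [[_ ubq _ _] [hub _ _ _]] := Eb.
have hub' : dot na ub = dot na a.
  apply/eqP; rewrite -subr_eq0 -dot_vsub; apply/eqP.
  by apply: dot_eq0_of_parallel ma0 c0 _; rewrite dot_vsub hub subrr.
by apply: (not_aligned_ppq na0 uap vap ubq uva); rewrite hub' ?hua ?hva.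
Qed.

Lemma edge_line_chord_strict a b na ua va la ma mb ub vb lb :
  a != b -> polyhull q a -> polyhull q b ->
  edge_point p a na ua va la -> edge_point q b mb ub vb lb ->
  (forall w, w \in q -> dot ma w <= dot ma a) -> cross na ma != 0 ->
  dot na (vsub b a) = 0 -> dot ma (vsub b a) < 0 /\ dot mb (vsub a b) < 0.
Proof.
move=> ab Qa Qb [[[na0 _] uap vap uva] [hua hva _ _]] [[[mb0 smb] ubq _ _] [hub _ _ _]]
  sma c0 d0.
have e0 : vsub b a != (0, 0) by rewrite vsub_neq0 // eq_sym.
have e0' : vsub a b != (0, 0) by rewrite vsub_neq0.
split; rewrite lt_def dot_vsub subr_le0 ?(polyhull_halfplane Qb sma)
  ?(polyhull_halfplane Qa smb) andbT -dot_vsub eq_sym.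
- by apply: contra c0 => /eqP h; apply/eqP/(cross_eq0_of_orthogonal e0 d0 h).
- apply/eqP => h.
  have d0' : dot na (vsub a b) = 0 by move: d0; rewrite !dot_vsub; lra.
  have z0 : dot mb (vsub ub b) = 0 by rewrite dot_vsub hub subrr.
  have := dot_eq0_of_parallel mb0 (cross_eq0_of_orthogonal e0' d0' h) z0.
  rewrite dot_vsub => hub'.
  by apply: (not_aligned_ppq na0 uap vap ubq uva); move: d0; rewrite dot_vsub; lra.
Qed.

Lemma crossings_same_sign_false a b ka kb : a != b -> crossing a ka -> crossing b kb ->
  connected (polyhull p `\` polyhull q) -> connected (polyhull q `\` polyhull p) ->
  ~ 0 < ka * kb.
Proof.
move=> ab [ka0 [na [ua [va [la [ma [ua' [va' [la' [DPa DQa eka]]]]]]]]]]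
  [kb0 [nb [ub [vb [lb [mb [ub' [vb' [lb' [DPb DQb ekb]]]]]]]]]] cPQ cQP.
rewrite -eka -ekb in ka0 kb0 * => cab.
have [Pa Pb] := (edge_point_polyhull DPa, edge_point_polyhull DPb).
have [Qa Qb] := (edge_point_polyhull DQa, edge_point_polyhull DQb).
have [[[_ sna] _ _ _] _] := DPa; have [[[_ snb] _ _ _] _] := DPb.
have [[[_ sma] _ _ _] _] := DQa; have [[[_ smb] _ _ _] _] := DQb.
have d1 : dot na (vsub b a) <= 0 by rewrite dot_vsub subr_le0 (polyhull_halfplane Pb sna).
have d2 : dot nb (vsub a b) <= 0 by rewrite dot_vsub subr_le0 (polyhull_halfplane Pa snb).
have QP : dot ma (vsub b a) < 0 -> dot mb (vsub a b) < 0 -> False.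
  move=> h1 h2; apply: (crossings_disconnect ab Pa Pb DQa DQb sna snb _ h1 h2 cQP).
  by rewrite (crossC na ma) (crossC nb mb) mulrNN.
case: (ltgtP (dot na (vsub b a)) 0) => h1; last first.
- by case: (edge_line_chord_strict ab Qa Qb DPa DQb sma ka0 h1).
- by move: d1; rewrite leNgt h1.
case: (ltgtP (dot nb (vsub a b)) 0) => h2; last first.
- have ba : b != a by rewrite eq_sym.
  by case: (edge_line_chord_strict ba Qb Qa DPb DQa smb kb0 h2) => hb ha; apply: QP.
- by move: d2; rewrite leNgt h2.
exact: (crossings_disconnect ab Qa Qb DPa DPb sma smb cab h1 h2 cPQ).
Qed.

End Crossings.

End PlaneGeometry.

Local Close Scope ring_scope.
Unset Implicit Arguments.

Theorem lemma2 (R : realType) (p q : seq (R * R)) :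
  is_convex_polygon p -> is_convex_polygon q ->
  general_position (p ++ q) -> weakly_disjoint p q ->
  forall x y z : R * R,
    (boundary (polyhull p) `&` boundary (polyhull q)) x ->
    (boundary (polyhull p) `&` boundary (polyhull q)) y ->
    (boundary (polyhull p) `&` boundary (polyhull q)) z ->
    x = y \/ y = z \/ x = z.
Proof.
move=> cp cq gp [cPQ [cQP disj]] x y z Bx By Bz.
have [kx Cx] := boundary_crossing gp disj cp cq Bx.
have [ky Cy] := boundary_crossing gp disj cp cq By.
have [kz Cz] := boundary_crossing gp disj cp cq Bz.
have [->|xy] := eqVneq x y; first by left.
have [->|yz] := eqVneq y z; first by right; left.
have [->|xz] := eqVneq x z; first by right; right.
exfalso; case: (two_of_three_same_sign Cx.1 Cy.1 Cz.1).
- exact: (crossings_same_sign_false gp disj xy Cx Cy cPQ cQP).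
- exact: (crossings_same_sign_false gp disj yz Cy Cz cPQ cQP).
- exact: (crossings_same_sign_false gp disj xz Cx Cz cPQ cQP).
Qed.
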